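(* For every first-order insertion query $\rho$ over the graph schema $\{E\}$ there is a constant $m\in\mathbb N$ such that for every undirected graph $G$, every change $\delta=\rho(\bar a)$ and all nodes $u,v$ of $G$ that are connected in $\delta(G)$, the bridge distance satisfies $\mathrm{bd}(u,v)\le m$.
   Context: A first-order insertion query $\rho(\bar p)$ for graphs is a rule $E := E(x,y)\lor\varphi(\bar p;x,y)$ with $\varphi$ first-order over $\{E\}$; the change $\delta=\rho(\bar a)$ maps a graph $G$ to the graph $\delta(G)$ with edge set $\{(b,c): G\models E(b,c)\lor\varphi(\bar a;b,c)\}$. For undirected graphs, modifications are symmetric: whenever an edge $(b,c)$ is inserted, so is $(c,b)$. For nodes $u,v$ connected in $\delta(G)$, the bridge distance $\mathrm{bd}(u,v)$ is the minimal number $d$ such that there is a path from $u$ to $v$ in $\delta(G)$ using exactly $d$ edges that are not edges of $G$ (newly inserted edges, called bridges). *)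

From mathcomp Require Import all_boot.
Set Implicit Arguments. Unset Strict Implicit. Unset Printing Implicit Defensive.

Inductive fo : Type :=
  | FTrue
  | FEdge of nat & nat
  | FEq of nat & nat
  | FNot of fo
  | FAnd of fo & fo
  | FOr of fo & fo
  | FEx of nat & fo
  | FAll of nat & fo.

Fixpoint fo_free (f : fo) (i : nat) : bool :=
  match f with
  | FTrue => false
  | FEdge a b => (i == a) || (i == b)
  | FEq a b => (i == a) || (i == b)
  | FNot g => fo_free g i
  | FAnd g h | FOr g h => fo_free g i || fo_free h i
  | FEx j g | FAll j g => (i != j) && fo_free g i
  end.

Definition upd (T : Type) (env : nat -> T) (j : nat) (t : T) : nat -> T :=
  fun i => if i == j then t else env i.

Fixpoint fo_sat (T : finType) (E : rel T) (env : nat -> T) (f : fo) : bool :=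
  match f with
  | FTrue => true
  | FEdge a b => E (env a) (env b)
  | FEq a b => env a == env b
  | FNot g => ~~ fo_sat E env g
  | FAnd g h => fo_sat E env g && fo_sat E env h
  | FOr g h => fo_sat E env g || fo_sat E env h
  | FEx j g => [exists t : T, fo_sat E (upd env j t) g]
  | FAll j g => [forall t : T, fo_sat E (upd env j t) g]
  end.

(* A first-order insertion query rho(p_1..p_k) : E := E(x,y) \/ phi(p;x,y).
   Convention: variable 0 is x, variable 1 is y, variable (2+i) is p_(i+1). *)
Record ins_query : Type := InsQuery {
  iq_arity : nat;
  iq_phi : fo;
  iq_wf : forall i, fo_free iq_phi i -> i < iq_arity.+2
}.

Definition iq_holds (T : finType) (E : rel T) (rho : ins_query)
    (a : seq T) (b c : T) : bool :=
  fo_sat E (fun i => nth b [:: b, c & a] i) (iq_phi rho).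

Definition undirected (T : finType) (E : rel T) : Prop :=
  forall b c, E b c = E c b.

(* The change delta = rho(a) applied to an undirected graph: modifications are
   symmetric, so (b,c) and (c,b) are inserted whenever either satisfies phi. *)
Definition apply_change (T : finType) (E : rel T) (rho : ins_query)
    (a : seq T) : rel T :=
  fun b c => [|| E b c, iq_holds E rho a b c | iq_holds E rho a c b].

(* Number of bridges (edges of delta(G) not in G) used along the walk
   u = x_0, x_1, ..., x_n (p = [:: x_1; ...; x_n]). *)
Fixpoint nbridges (T : Type) (E : rel T) (x : T) (p : seq T) : nat :=
  match p with
  | [::] => 0
  | y :: q => (~~ E x y) + nbridges E y q
  end.

Definition bridge_path (T : finType) (E E' : rel T) (u v : T) (d : nat) : Prop :=
  exists p : seq T, [/\ path E' u p, last u p = v & nbridges E u p = d].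

Definition bd_le (T : finType) (E E' : rel T) (u v : T) (m : nat) : Prop :=
  exists2 d, d <= m & bridge_path E E' u v d.

From mathcomp Require Import all_boot zify.
From Stdlib Require Import ClassicalEpsilon.
Set Implicit Arguments. Unset Strict Implicit. Unset Printing Implicit Defensive.

(* Let D be the bridge distance from u in delta(G). Along a path from u to v
   in delta(G) every layer k <= D(v) is entered by a bridge (x, y) with
   D(x) = k - 1 and D(y) = k, and the whole G-component of y lies in layer k.
   Record for such a bridge the rank-q types (q the quantifier rank of phi) of
   the tuples (a, x, y) and (a, y, x) relative to the G-component of y. If D(v)
   exceeded the arity of rho plus the number of possible records, two layers
   k1 < k2 free of parameters would carry bridges (x1, y1), (x2, y2) with equal
   records. Exchanging the G-components of y1 and y2 is invisible to formulas of
   rank q (a back-and-forth argument), so the condition that inserted x1 y1 also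
   inserts x1 y2, whence D(y2) <= k1 < k2, a contradiction. *)

Lemma exists_forall_transfer (T : finType) (P1 P2 : pred T) (S : T -> T -> Prop) :
  (forall t1, exists t2, S t1 t2) -> (forall t2, exists t1, S t1 t2) ->
  (forall t1 t2, S t1 t2 -> P1 t1 = P2 t2) ->
  [exists t, P1 t] = [exists t, P2 t] /\ [forall t, P1 t] = [forall t, P2 t].
Proof.
move=> forth back eqP12; split.
- apply/existsP/existsP => [[t1 h]|[t2 h]].
  + by have [t2 s] := forth t1; exists t2; rewrite -(eqP12 _ _ s).
  + by have [t1 s] := back t2; exists t1; rewrite (eqP12 _ _ s).
- apply/forallP/forallP => h t.
  + by have [t1 s] := back t; rewrite -(eqP12 _ _ s).
  + by have [t2 s] := forth t; rewrite (eqP12 _ _ s).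
Qed.

Lemma pigeonhole_sorted (K : finType) (f : nat -> K) (s : seq nat) :
  sorted ltn s -> #|K| < size s ->
  exists k1 k2, [/\ k1 \in s, k2 \in s, k1 < k2 & f k1 = f k2].
Proof.
move=> sorted_s; rewrite ltnNge => large.
have : ~~ uniq (map f s).
  by apply: contra large => /card_uniqP; rewrite size_map => <-; apply: max_card.
case/(uniqPn (f 0)) => i [j [ij]]; rewrite size_map => js.
have i_s := ltn_trans ij js; rewrite !(nth_map 0) // => fij.
exists (nth 0 s i), (nth 0 s j); split; rewrite ?mem_nth //.
exact: (sorted_ltn_nth ltn_trans 0 sorted_s i j i_s js ij).
Qed.

Lemma size_filter_notin_iota (b : seq nat) i m :
  m - size b <= size [seq k <- iota i m | k \notin b].
Proof.
have le_b : count (mem b) (iota i m) <= size b.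
  rewrite -size_filter; apply: uniq_leq_size; first exact/filter_uniq/iota_uniq.
  by move=> x; rewrite mem_filter => /andP [].
have := count_predC (mem b) (iota i m).
rewrite size_filter size_iota; change (count (predC (mem b)) (iota i m)) with
  (count (fun k => k \notin b) (iota i m)); lia.
Qed.

Fixpoint qrank (f : fo) : nat :=
  match f with
  | FNot g => qrank g
  | FAnd g h | FOr g h => maxn (qrank g) (qrank h)
  | FEx _ g | FAll _ g => (qrank g).+1
  | _ => 0
  end.

Fixpoint var_bound (f : fo) : nat :=
  match f with
  | FTrue => 0
  | FEdge x y | FEq x y => (maxn x y).+1
  | FNot g => var_bound g
  | FAnd g h | FOr g h => maxn (var_bound g) (var_bound h)
  | FEx j g | FAll j g => maxn j.+1 (var_bound g)
  end.

Section RelativizedTypes.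
Variable n : nat.

Definition atom_typeT : finType :=
  ({ffun 'I_n -> bool} * {ffun 'I_n * 'I_n -> bool} * {ffun 'I_n * 'I_n -> bool})%type.

Fixpoint rtypeT (q : nat) : finType :=
  match q with
  | 0 => atom_typeT
  | q'.+1 => (atom_typeT * {ffun 'I_n -> {set rtypeT q'}})%type
  end.

Definition rtype_atom q : rtypeT q -> atom_typeT :=
  match q with 0 => id | _.+1 => fst end.

Variables (T : finType) (E : rel T).

Definition rel_in (A : {set T}) (R : rel T) (e : nat -> T) : {ffun 'I_n * 'I_n -> bool} :=
  [ffun ij : 'I_n * 'I_n => [&& e ij.1 \in A, e ij.2 \in A & R (e ij.1) (e ij.2)]].

Definition atom_type (A : {set T}) (e : nat -> T) : atom_typeT :=
  ([ffun i : 'I_n => e i \in A], rel_in A E e, rel_in A eq_op e).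

(* The rank-[q] type of the variables [0..n-1] in the structure induced on
   [A]: of a variable outside [A] only that fact is recorded, while the
   quantifiers range over all of [T]. *)
Fixpoint rtype q (A : {set T}) (e : nat -> T) : rtypeT q :=
  match q with
  | 0 => atom_type A e
  | q'.+1 => (atom_type A e, [ffun j : 'I_n => [set rtype q' A (upd e j t) | t : T]])
  end.

Lemma rtype_atomE q A e : rtype_atom (rtype q A e) = atom_type A e.
Proof. by case: q. Qed.

Definition agree_in (A : {set T}) (e e' : nat -> T) :=
  forall i, e i = e' i \/ (e i \notin A /\ e' i \notin A).

Lemma agree_in_upd A e e' j t : agree_in A e e' -> agree_in A (upd e j t) (upd e' j t).
Proof. by move=> H i; rewrite /upd; case: (i == j); [left | exact: H]. Qed.

Lemma atom_type_agree A e e' : agree_in A e e' -> atom_type A e = atom_type A e'.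
Proof.
move=> H.
have mem i : (e i \in A) = (e' i \in A) by case: (H i) => [->|[/negbTE-> /negbTE->]].
have rel R : rel_in A R e = rel_in A R e'.
  apply/ffunP=> -[i j]; rewrite !ffunE /=.
  by case: (H i) (H j) => [->|[/negbTE-> /negbTE->]] [->|[/negbTE-> /negbTE->]].
by rewrite /atom_type !rel; congr (_, _, _); apply/ffunP=> i; rewrite !ffunE mem.
Qed.

Lemma rtype_agree q A e e' : agree_in A e e' -> rtype q A e = rtype q A e'.
Proof.
elim: q e e' => [|q IH] e e' H /=; first exact: atom_type_agree.
rewrite (atom_type_agree H); congr (_, _); apply/ffunP=> j; rewrite !ffunE.
by apply: eq_imset => t; apply/IH/agree_in_upd.
Qed.

Lemma rtype_mem q A B e e' i :
  rtype q A e = rtype q B e' -> i < n -> (e i \in A) = (e' i \in B).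
Proof.
move=> /(congr1 (@rtype_atom q)); rewrite !rtype_atomE => -[/ffunP eqA _ _] hi.
by have := eqA (Ordinal hi); rewrite !ffunE.
Qed.

Lemma rtype_rel q A B e e' :
  rtype q A e = rtype q B e' ->
  rel_in A E e = rel_in B E e' /\ rel_in A eq_op e = rel_in B eq_op e'.
Proof. by move=> /(congr1 (@rtype_atom q)); rewrite !rtype_atomE => -[]. Qed.

Lemma rtype_forth q A B e e' j t : rtype q.+1 A e = rtype q.+1 B e' -> j < n ->
  exists t', rtype q B (upd e' j t') = rtype q A (upd e j t).
Proof.
move=> /(congr1 snd) /ffunP eqj hj; have := eqj (Ordinal hj); rewrite !ffunE => eqS.
have : rtype q A (upd e j t) \in [set rtype q A (upd e j t0) | t0 : T] by apply: imset_f.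
by rewrite eqS => /imsetP [t' _ ->]; exists t'.
Qed.

Lemma rtype_outside q A B e e' j t t' :
  rtype q.+1 A e = rtype q.+1 B e' -> j < n -> t \notin A -> t' \notin B ->
  rtype q A (upd e j t) = rtype q B (upd e' j t').
Proof.
move=> eqAB hj tA t'B; have [t'' eq''] := rtype_forth t eqAB hj.
have t''B : t'' \notin B by move: (rtype_mem eq'' hj); rewrite /upd eqxx => ->.
rewrite -eq''; apply: rtype_agree => i; rewrite /upd.
by case: (i == j); [right | left].
Qed.

(* [e2] is [e1] with the roles of [K] and [K'] exchanged, up to rank-[q] types. *)
Definition swap_equiv (K K' : {set T}) q (e1 e2 : nat -> T) :=
  [/\ forall i, i < n -> e1 i \notin K -> e1 i \notin K' -> e1 i = e2 i,
      rtype q K e1 = rtype q K' e2 & rtype q K' e1 = rtype q K e2].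

Lemma swap_equivC (K K' : {set T}) q e1 e2 :
  swap_equiv K K' q e1 e2 -> swap_equiv K' K q e1 e2.
Proof. by case=> out eKK' eK'K; split=> // i hi h' h; apply: out. Qed.

Lemma swap_equiv_sym (K K' : {set T}) q e1 e2 :
  swap_equiv K K' q e1 e2 -> swap_equiv K' K q e2 e1.
Proof.
case=> out eKK' eK'K; split=> // i hi h' h; symmetry.
by apply: out; rewrite ?(rtype_mem eKK' hi) ?(rtype_mem eK'K hi).
Qed.

Lemma swap_equiv_forth_in (K K' : {set T}) q e1 e2 j t1 : [disjoint K & K'] ->
  swap_equiv K K' q.+1 e1 e2 -> j < n -> t1 \in K ->
  exists t2, swap_equiv K K' q (upd e1 j t1) (upd e2 j t2).
Proof.
move=> dKK' [out eKK' eK'K] hj t1K; have [t2 eq2] := rtype_forth t1 eKK' hj.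
have t2K' : t2 \in K' by move: (rtype_mem eq2 hj); rewrite /upd eqxx => ->.
exists t2; split=> //.
- by move=> i hi; rewrite /upd; case: (i == j); [rewrite t1K | exact: out].
- by apply: rtype_outside; rewrite ?(disjointFr dKK' t1K) ?(disjointFl dKK' t2K').
Qed.

Lemma swap_equiv_forth (K K' : {set T}) q e1 e2 j t1 : [disjoint K & K'] ->
  swap_equiv K K' q.+1 e1 e2 -> j < n ->
  exists t2, swap_equiv K K' q (upd e1 j t1) (upd e2 j t2).
Proof.
move=> dKK' eqv hj; case t1K: (t1 \in K); first exact: swap_equiv_forth_in.
case t1K': (t1 \in K').
  rewrite disjoint_sym in dKK'.
  by have [t2 /swap_equivC] := swap_equiv_forth_in dKK' (swap_equivC eqv) hj t1K'; exists t2.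
case: eqv => out eKK' eK'K; exists t1; split.
- by move=> i hi; rewrite /upd; case: (i == j) => //; exact: out.
- by apply: rtype_outside; rewrite ?t1K ?t1K'.
- by apply: rtype_outside; rewrite ?t1K ?t1K'.
Qed.

Lemma swap_equiv_back (K K' : {set T}) q e1 e2 j t2 : [disjoint K & K'] ->
  swap_equiv K K' q.+1 e1 e2 -> j < n ->
  exists t1, swap_equiv K K' q (upd e1 j t1) (upd e2 j t2).
Proof.
rewrite disjoint_sym => dK'K /swap_equiv_sym eqv hj.
by have [t1 /swap_equiv_sym] := swap_equiv_forth t2 dK'K eqv hj; exists t1.
Qed.

Lemma swap_equiv_quant (K K' : {set T}) q e1 e2 j (P : (nat -> T) -> bool) :
  [disjoint K & K'] -> swap_equiv K K' q.+1 e1 e2 -> j < n ->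
  (forall e1' e2', swap_equiv K K' q e1' e2' -> P e1' = P e2') ->
  [exists t, P (upd e1 j t)] = [exists t, P (upd e2 j t)] /\
  [forall t, P (upd e1 j t)] = [forall t, P (upd e2 j t)].
Proof.
move=> dKK' eqv hj eqP; apply: exists_forall_transfer (fun t1 t2 => eqP _ _).
- by move=> t1; apply: swap_equiv_forth.
- by move=> t2; apply: swap_equiv_back.
Qed.

Lemma swap_equiv_rel (R : rel T) (K K' : {set T}) q e1 e2 i j :
  (forall x y, R x y -> (x \in K) = (y \in K)) ->
  (forall x y, R x y -> (x \in K') = (y \in K')) ->
  swap_equiv K K' q e1 e2 -> i < n -> j < n ->
  rel_in K R e1 = rel_in K' R e2 -> rel_in K' R e1 = rel_in K R e2 ->
  R (e1 i) (e1 j) = R (e2 i) (e2 j).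
Proof.
move=> cK cK' [out eKK' eK'K] hi hj.
move=> /ffunP /(_ (Ordinal hi, Ordinal hj)) rK /ffunP /(_ (Ordinal hi, Ordinal hj)) rK'.
rewrite !ffunE /= in rK rK'.
have Rfalse (A : {set T}) x y : (forall x y, R x y -> (x \in A) = (y \in A)) ->
    (x \in A) != (y \in A) -> R x y = false.
  by move=> cA; apply: contraNF => /cA ->.
have [mi mj] := (rtype_mem eKK' hi, rtype_mem eKK' hj).
have [mi' mj'] := (rtype_mem eK'K hi, rtype_mem eK'K hj).
case xK: (e1 i \in K); case yK: (e1 j \in K).
- by move: rK; rewrite -mi -mj xK yK.
- by rewrite (Rfalse K) ?xK ?yK // (Rfalse K') // -mi -mj xK yK.
- by rewrite (Rfalse K) ?xK ?yK // (Rfalse K') // -mi -mj xK yK.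
case xK': (e1 i \in K'); case yK': (e1 j \in K').
- by move: rK'; rewrite -mi' -mj' xK' yK'.
- by rewrite (Rfalse K') ?xK' ?yK' // (Rfalse K) // -mi' -mj' xK' yK'.
- by rewrite (Rfalse K') ?xK' ?yK' // (Rfalse K) // -mi' -mj' xK' yK'.
by rewrite -out ?xK ?xK' // -(out j) ?yK ?yK'.
Qed.

Lemma swap_equiv_sat (K K' : {set T}) f q e1 e2 :
  (forall x y, E x y -> (x \in K) = (y \in K)) ->
  (forall x y, E x y -> (x \in K') = (y \in K')) -> [disjoint K & K'] ->
  var_bound f <= n -> qrank f <= q -> swap_equiv K K' q e1 e2 ->
  fo_sat E e1 f = fo_sat E e2 f.
Proof.
move=> cK cK' dKK'.
have ceq (A : {set T}) (x y : T) : x == y -> (x \in A) = (y \in A) by move=> /eqP ->.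
elim: f q e1 e2 => [|x y|x y|g IH|g IHg h IHh|g IHg h IHh|j g IH|j g IH] q e1 e2 /=;
  rewrite ?gtn_max ?geq_max.
- by [].
- move=> /andP [hx hy] _ eqv; case: (eqv) => _ /rtype_rel [rE _] /rtype_rel [rE' _].
  exact: swap_equiv_rel cK cK' eqv hx hy rE rE'.
- move=> /andP [hx hy] _ eqv; case: (eqv) => _ /rtype_rel [_ rE] /rtype_rel [_ rE'].
  exact: (swap_equiv_rel (R := eq_op)) (ceq K) (ceq K') eqv hx hy rE rE'.
- by move=> hv hq eqv; rewrite (IH q e1 e2).
- by move=> /andP [hg hh] /andP [qg qh] eqv; rewrite (IHg q e1 e2) ?(IHh q e1 e2).
- by move=> /andP [hg hh] /andP [qg qh] eqv; rewrite (IHg q e1 e2) ?(IHh q e1 e2).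
- move=> /andP [hj hv]; case: q => // q hq eqv.
  exact: proj1 (swap_equiv_quant dKK' eqv hj (fun e1' e2' => IH q e1' e2' hv hq)).
- move=> /andP [hj hv]; case: q => // q hq eqv.
  exact: proj2 (swap_equiv_quant dKK' eqv hj (fun e1' e2' => IH q e1' e2' hv hq)).
Qed.

End RelativizedTypes.

Definition prop_bool (P : Prop) : bool :=
  if excluded_middle_informative P then true else false.

Lemma prop_boolP (P : Prop) : reflect P (prop_bool P).
Proof. by rewrite /prop_bool; case: excluded_middle_informative => h; constructor. Qed.

Lemma nbridges_rcons (T : Type) (E : rel T) x p z :
  nbridges E x (rcons p z) = nbridges E x p + ~~ E (last x p) z.
Proof. by elim: p x => [|y p IH] x /=; rewrite ?addn0 // IH addnA. Qed.

Section BridgeDistance.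
Variables (T : finType) (E E' : rel T) (u : T).

Lemma bridge_path_exists w :
  exists k, ~~ connect E' u w || prop_bool (bridge_path E E' u w k).
Proof.
case: (boolP (connect E' u w)) => [/connectP [p pp ->]|]; last by exists 0.
by exists (nbridges E u p); apply/prop_boolP; exists p.
Qed.

(* The bridge distance from [u]; it is [0] for nodes not reachable from [u]. *)
Definition bridge_dist w := ex_minn (bridge_path_exists w).

Lemma bridge_distP w : connect E' u w ->
  bridge_path E E' u w (bridge_dist w) /\
  forall k, bridge_path E E' u w k -> bridge_dist w <= k.
Proof.
move=> cw; rewrite /bridge_dist; case: ex_minnP => m /orP [/negP //|/prop_boolP bpm] minm.
by split=> // k bpk; apply: minm; apply/orP; right; apply/prop_boolP.
Qed.

Lemma bridge_dist_u : bridge_dist u = 0.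
Proof.
have [_ minu] := bridge_distP (connect0 E' u).
by apply/eqP; rewrite -leqn0; apply: minu; exists [::].
Qed.

Lemma bridge_dist_step w z : connect E' u w -> E' w z ->
  bridge_dist z <= bridge_dist w + ~~ E w z.
Proof.
move=> cw wz; have [[p [pp lp np]] _] := bridge_distP cw.
have [_ minz] := bridge_distP (connect_trans cw (connect1 wz)).
apply: minz; exists (rcons p z).
by rewrite rcons_path pp lp last_rcons nbridges_rcons lp np.
Qed.

Lemma bridge_dist_layer k p x : connect E' u x -> path E' x p ->
  bridge_dist x < k <= bridge_dist (last x p) ->
  exists x' y', [/\ bridge_dist x' = k.-1, bridge_dist y' = k, E' x' y', ~~ E x' y'
                  & connect E' u x'].
Proof.
elim: p x => [|y p IH] x cx /=; first by move=> _ /andP [/leq_trans h /h]; rewrite ltnn.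
case/andP=> xy py /andP [kx ky]; have step := bridge_dist_step cx xy.
case: (leqP k (bridge_dist y)) => [yk|]; last first.
  by move=> ky'; apply: IH (connect_trans cx (connect1 xy)) py _; rewrite ky' ky.
exists x, y; move: step; case: (E x y) => /= step; first lia.
by split=> //; lia.
Qed.

Hypotheses (Esym : undirected E) (subE : subrel E E').

Lemma bridge_dist_edge w z : connect E' u w -> E w z -> bridge_dist z = bridge_dist w.
Proof.
move=> cw wz; have zw : E z w by rewrite Esym.
have cz := connect_trans cw (connect1 (subE wz)).
have := bridge_dist_step cw (subE wz); have := bridge_dist_step cz (subE zw).
rewrite wz zw /= !addn0; lia.
Qed.

Lemma bridge_dist_connect y z : connect E' u y -> connect E y z ->
  bridge_dist z = bridge_dist y.
Proof.
move=> cy /connectP [p pp ->]; elim: p y cy pp => [|w p IH] y cy //= /andP [yw pw].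
by rewrite (IH w) ?(bridge_dist_edge cy yw) //; apply: connect_trans cy (connect1 (subE yw)).
Qed.

End BridgeDistance.

Definition bridge_keyT (rho : ins_query) : finType :=
  let rtq := rtypeT (var_bound (iq_phi rho)) (qrank (iq_phi rho)) in
  ({ffun bool -> rtq} * rtq)%type.

Section InsertionBridges.
Variables (T : finType) (E : rel T) (rho : ins_query) (a : seq T).
Hypothesis Esym : undirected E.
Local Notation phi := (iq_phi rho).
Local Notation n := (var_bound phi).
Local Notation q := (qrank phi).
Local Notation E' := (apply_change E rho a).

(* The assignments interpreting phi(a; x, y) and, for [flip], phi(a; y, x);
   variables beyond the parameters get the default value [x], resp. [y]. *)
Definition bridge_env (flip : bool) (x y : T) : nat -> T :=
  if flip then nth y [:: y, x & a] else nth x [:: x, y & a].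

Lemma bridge_env_edge flip x y : fo_sat E (bridge_env flip x y) phi -> E' x y.
Proof. by case: flip => h; rewrite /apply_change /iq_holds h !orbT. Qed.

Lemma bridge_env_bridge x y : E' x y -> ~~ E x y ->
  exists flip, fo_sat E (bridge_env flip x y) phi.
Proof.
by rewrite /apply_change => /or3P [->|h|h] //; [exists false | exists true].
Qed.

Lemma bridge_env_range flip x y i : bridge_env flip x y i \in [:: y, x & a].
Proof.
have nth_mem (d : T) s : nth d (d :: s) i \in d :: s.
  by case: (ltnP i (size (d :: s))) => hi; [apply: mem_nth | rewrite nth_default ?mem_head].
case: flip; first exact: nth_mem.
by have := nth_mem x (y :: a); rewrite /bridge_env !inE orbCA.
Qed.

Lemma bridge_env_y flip x y y' i :
  (bridge_env flip x y i = y /\ bridge_env flip x y' i = y') \/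
  bridge_env flip x y i = bridge_env flip x y' i.
Proof.
case: flip i => [] [|[|i]] /=; [left | right | | right | left | right] => //.
by case: (ltnP i (size a)) => hi; [right; apply: set_nth_default | left; rewrite !nth_default].
Qed.

Lemma bridge_env_x flip x x' y i :
  bridge_env flip x y i = bridge_env flip x' y i \/
  (bridge_env flip x y i = x /\ bridge_env flip x' y i = x').
Proof.
case: flip i => [] [|[|i]] /=; [left | right | left | right | left | ] => //.
by case: (ltnP i (size a)) => hi; [left; apply: set_nth_default | right; rewrite !nth_default].
Qed.

Definition component (y : T) : {set T} := [set z | connect E y z].

Lemma component_closed y x z : E x z -> (x \in component y) = (z \in component y).
Proof.
move=> xz; rewrite !inE; apply/idP/idP => yc; apply: connect_trans yc (connect1 _) => //.
by rewrite Esym.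
Qed.

Lemma component_disjoint y1 y2 :
  y2 \notin component y1 -> [disjoint component y1 & component y2].
Proof.
move=> y12; apply/pred0P => z /=; rewrite !inE; apply/negP => /andP [c1 c2].
have esym : connect_sym E by apply: sym_connect_sym => ??; rewrite Esym.
by move: y12; rewrite inE (connect_trans c1) // esym.
Qed.

Lemma bridge_transfer flip x1 y1 x2 y2 :
  y2 \notin component y1 -> x2 \notin component y2 ->
  {in x1 :: a, forall z, z \notin component y1} ->
  {in x1 :: a, forall z, z \notin component y2} ->
  rtype n E q (component y1) (bridge_env flip x1 y1) =
    rtype n E q (component y2) (bridge_env flip x2 y2) ->
  rtype n E q (component y1) (fun _ => x1) = rtype n E q (component y2) (fun _ => x2) ->
  fo_sat E (bridge_env flip x1 y1) phi = fo_sat E (bridge_env flip x1 y2) phi.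
Proof.
move=> y2c1 x2c2 out1 out2 key_env key_const.
have disj := component_disjoint y2c1.
have y1c1 : y1 \in component y1 by rewrite inE connect0.
have y1c2 : y1 \notin component y2 by rewrite (disjointFr disj y1c1).
have env_out y (C : {set T}) i : y \notin C -> {in x1 :: a, forall z, z \notin C} ->
    bridge_env flip x1 y i \notin C.
  by move=> yC aC; move: (bridge_env_range flip x1 y i); rewrite inE => /predU1P [->|/aC].
have x1c2 : x1 \notin component y2 by rewrite out2 ?mem_head.
apply: (swap_equiv_sat (@component_closed y1) (@component_closed y2) disj (leqnn _) (leqnn _)).
split.
- by move=> i _; case: (bridge_env_y flip x1 y1 y2 i) => [[-> _]|//]; rewrite y1c1.
- rewrite key_env; apply: rtype_agree => i.
  by case: (bridge_env_x flip x2 x1 y2 i) => [|[-> ->]]; [left | right].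
- transitivity (rtype n E q (component y2) (fun _ => x2)).
    by apply: rtype_agree => i; right; rewrite env_out.
  rewrite -key_const; apply: rtype_agree => i; right.
  have x1c1 : x1 \notin component y1 by rewrite out1 ?mem_head.
  by rewrite env_out.
Qed.

Variable u : T.
Local Notation D := (bridge_dist E E' u).

(* The second component is the type of the G-component of [y] alone: the
   constant assignment to [x], which lies outside it, places no variable there. *)
Definition bridge_key (xy : T * T) : bridge_keyT rho :=
  ([ffun flip => rtype n E q (component xy.2) (bridge_env flip xy.1 xy.2)],
   rtype n E q (component xy.2) (fun _ => xy.1)).

Definition layer_bridge k (xy : T * T) : bool :=
  [&& D xy.1 == k.-1, D xy.2 == k, E' xy.1 xy.2, ~~ E xy.1 xy.2 & connect E' u xy.1].

Definition layer_key k := bridge_key (odflt (u, u) [pick xy | layer_bridge k xy]).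

Lemma layer_key_bridge v k : connect E' u v -> 0 < k <= D v ->
  exists2 xy, layer_bridge k xy & layer_key k = bridge_key xy.
Proof.
move=> /connectP [p pp ->] hk.
have [|x [y [Dx Dy xy nExy cx]]] := bridge_dist_layer (E := E) (k := k) (connect0 E' u) pp.
  by rewrite bridge_dist_u.
rewrite /layer_key; case: pickP => [xy' b | none]; first by exists xy'.
by move: (none (x, y)); rewrite /layer_bridge /= Dx Dy xy nExy cx !eqxx.
Qed.

Lemma layer_bridge_key_neq k1 k2 xy1 xy2 : 0 < k1 < k2 ->
  k1 \notin map D a -> k2 \notin map D a ->
  layer_bridge k1 xy1 -> layer_bridge k2 xy2 -> bridge_key xy1 != bridge_key xy2.
Proof.
case: xy1 xy2 => [x1 y1] [x2 y2] /andP [k1_gt0 k12] k1a k2a.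
case/and5P=> /eqP Dx1 /eqP Dy1 b1 nE1 cx1 /and5P [/eqP Dx2 /eqP Dy2 b2 _ cx2].
apply/negP => /eqP [/ffunP key_env key_const].
have subE : subrel E E' by move=> ? ?; rewrite /apply_change => ->.
have [cy1 cy2] := (connect_trans cx1 (connect1 b1), connect_trans cx2 (connect1 b2)).
have notin_comp y z : connect E' u y -> D z != D y -> z \notin component y.
  by move=> cy; apply: contra; rewrite inE => /(bridge_dist_connect Esym subE cy) ->.
have out y k : connect E' u y -> D y = k -> k \notin map D a -> D x1 != k ->
    {in x1 :: a, forall z, z \notin component y}.
  move=> cy Dy ka x1k z /predU1P [->|za]; apply: (notin_comp _ _ cy); rewrite Dy //.
  by apply: contraNneq ka => <-; apply: map_f.
have [flip sat1] := bridge_env_bridge b1 nE1.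
have sat2 : fo_sat E (bridge_env flip x1 y2) phi.
  rewrite -(bridge_transfer (y1 := y1) (x2 := x2)) //.
  - by apply: notin_comp; rewrite // Dy1 Dy2 gtn_eqF.
  - by apply: notin_comp; rewrite // Dx2 Dy2 ltn_eqF // ltn_predL (ltn_trans k1_gt0).
  - by apply: (out _ k1) => //; rewrite Dx1 ltn_eqF // ltn_predL.
  - by apply: (out _ k2) => //; rewrite Dx1 ltn_eqF // (leq_ltn_trans (leq_pred k1)).
  - by have := key_env flip; rewrite !ffunE.
have := bridge_dist_step E cx1 (bridge_env_edge sat2).
have := leq_b1 (~~ E x1 y2); rewrite -(leq_add2l k1.-1) addn1 prednK // => le_b.
by rewrite Dx1 Dy2 => /leq_trans /(_ le_b); rewrite leqNgt k12.
Qed.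

End InsertionBridges.

Theorem lemma4p2 :
  forall rho : ins_query, exists m : nat,
    forall (T : finType) (E : rel T), undirected E ->
    forall a : seq T, size a = iq_arity rho ->
    forall u v : T, connect (apply_change E rho a) u v ->
      bd_le E (apply_change E rho a) u v m.
Proof.
move=> rho; exists (iq_arity rho + #|bridge_keyT rho|).
move=> T E Esym a size_a u v cuv.
set D := bridge_dist E (apply_change E rho a) u.
have [bpv _] := bridge_distP E cuv.
suff: D v <= iq_arity rho + #|bridge_keyT rho| by exists (D v).
rewrite leqNgt; apply/negP => long.
pose layers := [seq k <- iota 1 (D v) | k \notin map D a].
have sorted_layers : sorted ltn layers.
  by apply: sorted_filter; [exact: ltn_trans | exact: iota_ltn_sorted].
have many : #|bridge_keyT rho| < size layers.
  by have := size_filter_notin_iota (map D a) 1 (D v); rewrite size_map size_a -/layers; lia.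
have [k1 [k2 [l1 l2 k12 same_key]]] :=
  pigeonhole_sorted (layer_key E rho a u) sorted_layers many.
move: l1 l2; rewrite !mem_filter !mem_iota => /and3P [k1a k1_gt0 _] /and3P [k2a _ k2v].
have k1_range : 0 < k1 <= D v by rewrite k1_gt0; lia.
have k2_range : 0 < k2 <= D v by rewrite (leq_ltn_trans _ k12) //; lia.
have [xy1 b1 key1] := layer_key_bridge cuv k1_range.
have [xy2 b2 key2] := layer_key_bridge cuv k2_range.
have k_order : 0 < k1 < k2 by rewrite k1_gt0.
by have := layer_bridge_key_neq Esym k_order k1a k2a b1 b2; rewrite -key1 -key2 same_key eqxx.
Qed.
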